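(* In the setting of MP (two-stage mini-pooling) with quantitative assays subject to multiplicative measurement error, the sensitivity of MP satisfies $\mathrm{SENS}_{\mathrm{IND}}^2\le\mathrm{SENS}_{\mathrm{MP}}\le\mathrm{SENS}_{\mathrm{IND}}$, where: for cutoff $C>0$ and pool size $K\ge2$, individuals have true values $V_j\ge0$ (failure iff $V_j>C$) and measured values $\widetilde V_j=V_j\varepsilon_j$, the pool has measured total $\widetilde T_1=\varepsilon_{\mathrm{pool}}\sum_{j=1}^KV_j$, the errors $\varepsilon_1,\dots,\varepsilon_K,\varepsilon_{\mathrm{pool}}$ are i.i.d. with $\varepsilon\overset{d}{=}\varepsilon^{-1}$ and independent of the $V$'s; $\mathrm{SENS}_{\mathrm{IND}}=\Pr(\widetilde V_k>C\mid V_k>C)$ and $\mathrm{SENS}_{\mathrm{MP}}=\Pr(\widetilde T_1>C,\ \widetilde V_k>C\mid V_k>C)$.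
   Context: MP classifies individual $k$ positive iff the pool is positive ($\widetilde T_1>C$, i.e. measured pool value exceeds $C/K$) and the individual's own measured value exceeds $C$. Values $V_j$ are nonnegative. *)

From HB Require Import structures.
From mathcomp Require Import all_boot all_order all_algebra.
From mathcomp Require Import all_classical all_reals all_analysis.
Set Implicit Arguments. Unset Strict Implicit. Unset Printing Implicit Defensive.
Import Order.TTheory GRing.Theory Num.Theory.
Local Open Scope classical_set_scope.
Local Open Scope ring_scope.

Definition cprob d (T : measurableType d) (R : realType) (P : probability T R)
  (A B : set T) : R := fine (P (A `&` B)) / fine (P B).

(* Joint independence of the random vector (V_1,...,V_K) from the errors
   eps_1,...,eps_K, eps_pool, together with mutual independence of the errors:
   product rule on all measurable rectangles (these form a pi-system generating
   the relevant sigma-algebras). *)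
Definition MP_independent d (T : measurableType d) (R : realType)
  (P : probability T R) (K : nat) (V eps : 'I_K -> T -> R) (epsp : T -> R) :=
  forall (A B : 'I_K -> set R) (Bp : set R),
    (forall j, measurable (A j)) -> (forall i, measurable (B i)) -> measurable Bp ->
    P ((\bigcap_j (V j @^-1` A j)) `&` (\bigcap_i (eps i @^-1` B i)) `&` (epsp @^-1` Bp))
    = (P (\bigcap_j (V j @^-1` A j)) * (\prod_(i < K) P (eps i @^-1` B i))
       * P (epsp @^-1` Bp))%E.

Definition same_law d (T : measurableType d) (R : realType) (P : probability T R)
  (X Y : T -> R) := forall B : set R, measurable B -> P (X @^-1` B) = P (Y @^-1` B).

From HB Require Import structures.
From mathcomp Require Import all_boot all_order all_algebra.
From mathcomp Require Import all_classical all_reals all_analysis.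
From mathcomp Require Import measurable_realfun ring lra.
Import Order.TTheory GRing.Theory Num.Theory.
Local Open Scope classical_set_scope.
Local Open Scope ring_scope.

(* The upper bound holds because the MP event is contained in the individual
   event.  For the lower bound, keep only V_k in the pool: the MP event contains
   {V_k epsp > C, V_k eps_k > C}.  Given V_k = v, these two events are
   independent with the same probability g(v) = P(eps > C/v), so with
   A = {V_k > C} we have P(IND, A) = E[g(V_k); A] and P(MP, A) >= E[g(V_k)^2; A],
   and Cauchy-Schwarz gives P(IND, A)^2 <= P(A) P(MP, A).  Conditioning is
   avoided by slicing A into N pieces according to C/V_k in [j/N, (j+1)/N):
   the discrete Cauchy-Schwarz inequality then holds up to the probability that
   eps_k lies within 1/N above C/V_k, which vanishes as N grows. *)

Lemma weighted_sum_sqr_le {R : realFieldType} {n} (p G : 'I_n -> R) :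
  (forall j, 0 <= p j) ->
  (\sum_j p j * G j) ^+ 2 <= (\sum_j p j) * \sum_j p j * G j ^+ 2.
Proof.
move=> p_ge0.
set S0 := \sum_j p j; set S1 := \sum_j p j * G j; set S2 := \sum_j p j * G j ^+ 2.
have S0_ge0 : 0 <= S0 by exact: sumr_ge0.
have quad_ge0 m : 0 <= S2 - 2 * m * S1 + m ^+ 2 * S0.
  have -> : S2 - 2 * m * S1 + m ^+ 2 * S0 = \sum_j p j * (G j - m) ^+ 2.
    rewrite /S2 /S1 /S0 !mulr_sumr -sumrN -!big_split /=.
    by apply: eq_bigr => j _; ring.
  by apply: sumr_ge0 => j _; rewrite mulr_ge0 ?sqr_ge0.
have [S0_eq0|S0_neq0] := eqVneq S0 0.
  have p_eq0 j : p j = 0.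
    by move/eqP: S0_eq0; rewrite psumr_eq0 // => /allP/(_ j (mem_index_enum _))/eqP.
  have -> : S1 = 0 by rewrite /S1 big1 // => j _; rewrite p_eq0 mul0r.
  by rewrite S0_eq0 expr0n mul0r.
have S0_gt0 : 0 < S0 by rewrite lt_def S0_neq0.
have := quad_ge0 (S1 / S0).
have -> : S2 - 2 * (S1 / S0) * S1 + (S1 / S0) ^+ 2 * S0 = (S0 * S2 - S1 ^+ 2) / S0.
  by field.
by rewrite pmulr_lge0 ?invr_gt0 // subr_ge0.
Qed.

Lemma sqr_ratio_le {R : realFieldType} (a x m : R) :
  0 < a -> x ^+ 2 <= a * m -> m <= x -> (x / a) ^+ 2 <= m / a <= x / a.
Proof.
move=> a_gt0 xm mx; apply/andP; split; last by rewrite ler_pM2r ?invr_gt0.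
by rewrite expr_div_n ler_pdivrMr ?exprn_gt0 // [in leRHS]expr2 mulrA divfK ?gt_eqF // mulrC.
Qed.

Lemma bigsetU_ord_sub {T n} (F : 'I_n -> set T) (A : set T) :
  (forall j, F j `<=` A) -> \big[setU/set0]_(j < n) F j `<=` A.
Proof. by move=> FA; apply: (big_ind (fun U => U `<=` A)) => // U U' UA U'A t [/UA|/U'A]. Qed.

Lemma sub_bigsetU_ord {T n} (F : 'I_n -> set T) j : F j `<=` \big[setU/set0]_(i < n) F i.
Proof. by rewrite (bigD1 j) //=; exact: subsetUl. Qed.

Section measurable_sets.
Context {d} {T : measurableType d} {R : realType}.
Implicit Types (f g : T -> R) (S : set R).

Lemma measurable_preimage {f S} :
  measurable_fun setT f -> measurable S -> measurable (f @^-1` S).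
Proof. by move=> mf mS; rewrite -[_ @^-1` _]setTI; exact: mf. Qed.

Lemma measurable_ltr_set {f g} : measurable_fun setT f -> measurable_fun setT g ->
  measurable [set t | f t < g t].
Proof.
move=> mf mg.
have := measurable_fun_ltr mf mg measurableT (Y := [set true]) I.
by rewrite setTI preimage_true.
Qed.

Lemma measurable_ler_set {f g} : measurable_fun setT f -> measurable_fun setT g ->
  measurable [set t | f t <= g t].
Proof.
move=> mf mg.
have := measurable_fun_ler mf mg measurableT (Y := [set true]) I.
by rewrite setTI preimage_true.
Qed.

End measurable_sets.

Section real_probability.
Context {d} {T : measurableType d} {R : realType} (P : probability T R).
Implicit Types A B : set T.

Definition pr A : R := fine (P A).

Lemma prE {A} : measurable A -> P A = (pr A)%:E.
Proof. by move=> mA; rewrite /pr fineK // fin_num_measure. Qed.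

Lemma pr_ge0 A : 0 <= pr A.
Proof. exact: fine_ge0. Qed.

Lemma le_pr {A B} : measurable A -> measurable B -> A `<=` B -> pr A <= pr B.
Proof. by move=> mA mB AB; rewrite -lee_fin -!prE //; apply: le_measure; rewrite ?inE. Qed.

Lemma prU_le {A B} : measurable A -> measurable B -> pr (A `|` B) <= pr A + pr B.
Proof.
move=> mA mB; rewrite -lee_fin EFinD -!prE //; last exact: measurableU.
exact: measureU2.
Qed.

Lemma pr_bigsetU n (F : 'I_n -> set T) :
  (forall j, measurable (F j)) -> trivIset setT F ->
  pr (\big[setU/set0]_(j < n) F j) = \sum_j pr (F j).
Proof.
move=> mF tF; rewrite /pr measure_semi_additive_ord //; last exact: bigsetU_measurable.
by rewrite (eq_bigr _ (fun j _ => prE (mF j))) sumEFin.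
Qed.

Lemma cprobE A B : cprob P A B = pr (A `&` B) / pr B.
Proof. by []. Qed.

End real_probability.

Definition indep3 {d} {T : measurableType d} {R : realType} (P : probability T R)
    (f g h : T -> R) :=
  forall S B B', measurable S -> measurable B -> measurable B' ->
  P (f @^-1` S `&` g @^-1` B `&` h @^-1` B') =
  (P (f @^-1` S) * P (g @^-1` B) * P (h @^-1` B'))%E.

Lemma MP_independent_indep3 {d} {T : measurableType d} {R : realType}
    {P : probability T R} {K} {V eps : 'I_K -> T -> R} {epsp} k :
  MP_independent P V eps epsp -> indep3 P (V k) (eps k) epsp.
Proof.
move=> indep S B B' mS mB mB'.
have bigcap_at (F : 'I_K -> T -> R) (A : set R) :
    \bigcap_j (F j @^-1` (if j == k then A else setT)) = F k @^-1` A.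
  apply/seteqP; split=> t /=; first by move=> /(_ k I); rewrite eqxx.
  by move=> At j _; case: eqP => [->|].
have := indep (fun j => if j == k then S else setT) (fun i => if i == k then B else setT) B'.
rewrite !bigcap_at => ->; [|by move=> j; case: eqP..|by []].
congr (_ * _ * _)%E.
rewrite (bigD1 k) //= eqxx big1 ?mule1 // => i /negbTE ->.
by rewrite preimage_setT probability_setT.
Qed.

Section slices.
Context {R : realType} {C : R} {N : nat}.
Hypothesis C_ge0 : 0 <= C.

(* On [slice j], [v * x > C] is implied by [beyond j x] and
   fails outside [beyond j] only if x is within 1/N above C/v. *)
Definition slice (j : 'I_N) : set R :=
  [set v | C < v] `&` [set v | j%:R * v <= C * N%:R] `&` [set v | C * N%:R < j.+1%:R * v].

Definition beyond (j : 'I_N) : set R := [set x | j.+1%:R < N%:R * x].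

Lemma measurable_slice j : measurable (slice j).
Proof.
apply: measurableI; first apply: measurableI.
- exact: measurable_ltr_set.
- by apply: measurable_ler_set => //; exact: measurable_funM.
- by apply: measurable_ltr_set => //; exact: measurable_funM.
Qed.

Lemma measurable_beyond j : measurable (beyond j).
Proof. by apply: measurable_ltr_set => //; exact: measurable_funM. Qed.

Lemma slice_inj {i j v} : slice i v -> slice j v -> i = j.
Proof.
move=> [[Cv iv] vi] [[_ jv] vj]; apply: val_inj => /=.
have v_gt0 : 0 < v by exact: le_lt_trans Cv.
have /(le_lt_trans iv) : C * N%:R < j.+1%:R * v := vj.
have /(le_lt_trans jv) : C * N%:R < i.+1%:R * v := vi.
rewrite !ltr_pM2r // !ltr_nat !ltnS => ji ij.
by apply/eqP; rewrite eqn_leq ij ji.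
Qed.

Lemma slice_beyond {j v x} : slice j v -> beyond j x -> C < v * x.
Proof.
move=> [[Cv _] vj] jx; rewrite /beyond /= in Cv vj jx.
have v_gt0 : 0 < v by exact: le_lt_trans Cv.
have N_gt0 : 0 < N%:R :> R by rewrite ltr0n (leq_ltn_trans (leq0n j) (ltn_ord j)).
rewrite -(ltr_pM2r N_gt0).
have : j.+1%:R * v < N%:R * x * v by rewrite ltr_pM2r.
lra.
Qed.

Lemma slice_not_beyond {j v x} : slice j v -> ~ beyond j x -> N%:R * (v * x - C) <= v.
Proof.
move=> [[Cv jv] _] /negP; rewrite /beyond /= -leNgt => xj; rewrite /= in Cv jv.
have v_gt0 : 0 < v by exact: le_lt_trans Cv.
rewrite -natr1 in xj; nra.
Qed.

Lemma slice_cover {v} : (0 < N)%N -> C < v -> exists j, slice j v.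
Proof.
move=> N_gt0 Cv; have v_gt0 : 0 < v by exact: le_lt_trans Cv.
have r_ge0 : 0 <= C * N%:R / v by rewrite divr_ge0 ?mulr_ge0 // ltW.
have /andP[lo hi] := truncn_itv r_ge0.
have jN : (Num.trunc (C * N%:R / v) < N)%N.
  by rewrite truncn_lt_nat // ltr_pdivrMr // mulrC ltr_pM2l ?ltr0n.
exists (Ordinal jN); split; first split => //=.
- by move: lo; rewrite ler_pdivlMr.
- by move: hi; rewrite ltr_pdivrMr.
Qed.

End slices.

Arguments slice {R} C N j.
Arguments beyond {R} N j.

#[local] Hint Resolve measurable_slice measurable_beyond : core.

Section near_cutoff.
Context {d} {T : measurableType d} {R : realType}.
Variables (f e : T -> R) (C : R).
Hypotheses (mf : measurable_fun setT f) (me : measurable_fun setT e).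

Definition near_cutoff (N : nat) : set T :=
  [set t | C < f t * e t] `&` [set t | N%:R * (f t * e t - C) <= f t].

Lemma measurable_near_cutoff N : measurable (near_cutoff N).
Proof.
have mfe : measurable_fun setT (fun t => f t * e t) by exact: measurable_funM.
apply: measurableI; first exact: measurable_ltr_set.
apply: measurable_ler_set => //; apply: measurable_funM => //.
exact: measurable_funB.
Qed.

Lemma near_cutoff_nonincreasing : nonincreasing_seq near_cutoff.
Proof.
move=> m n mn; apply/subsetPset => t [Ct nt]; split => //=.
by apply: le_trans nt; rewrite ler_wpM2r ?ler_nat // subr_ge0 ltW.
Qed.

Lemma bigcap_near_cutoff : \bigcap_N near_cutoff N = set0.
Proof.
apply/seteqP; split => // t near_t.
have [Ct _] := near_t 0%N I.
have gap_gt0 : 0 < f t * e t - C by rewrite subr_gt0.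
have [_ /=] := near_t (Num.trunc (f t / (f t * e t - C))).+1 I.
have := truncnS_gt (f t / (f t * e t - C)).
by rewrite ltr_pdivrMr // => /lt_le_trans/[apply]; rewrite ltxx.
Qed.

Lemma pr_near_cutoff_cvg0 (P : probability T R) :
  pr P (near_cutoff N) @[N --> \oo] --> 0.
Proof.
have := nonincreasing_cvg_mu (mu := P) _ measurable_near_cutoff _ near_cutoff_nonincreasing.
rewrite bigcap_near_cutoff measure0 => /(_ _ _)/fine_cvgP[] //.
by rewrite ltey_eq fin_num_measure //; exact: measurable_near_cutoff.
Qed.

End near_cutoff.

Arguments measurable_near_cutoff {d T R f e} C.
Arguments pr_near_cutoff_cvg0 {d T R f e} C.

Section cutoff_cauchy_schwarz.
Context {d} {T : measurableType d} {R : realType} (P : probability T R).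
Variables (f e e' : T -> R) (C : R).
Hypotheses (mf : measurable_fun setT f) (me : measurable_fun setT e)
  (me' : measurable_fun setT e').
Hypothesis C_ge0 : 0 <= C.
Hypothesis indep_f_e_e' : indep3 P f e e'.
Hypothesis law_e_e' : same_law P e e'.

Section discretization.
Variable N : nat.
Hypothesis N_gt0 : (0 < N)%N.

Let Z j := f @^-1` slice C N j.
Let X j := Z j `&` e @^-1` beyond N j.
Let Y j := X j `&` e' @^-1` beyond N j.
Let q j := pr P (e' @^-1` beyond N j).

Let mZ j : measurable (Z j).
Proof. exact: measurable_preimage (measurable_slice j). Qed.

Let me'_beyond j : measurable (e' @^-1` beyond N j).
Proof. exact: measurable_preimage (measurable_beyond j). Qed.

Let mX j : measurable (X j).
Proof. exact: measurableI (mZ j) (measurable_preimage me (measurable_beyond j)). Qed.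

Let mY j : measurable (Y j).
Proof. exact: measurableI (mX j) (me'_beyond j). Qed.

Let trivIset_in_slices (F : 'I_N -> set T) :
  (forall j, F j `<=` Z j) -> trivIset setT F.
Proof. by move=> FZ i j _ _ [t [/FZ + /FZ]]; rewrite /Z /=; exact: (slice_inj C_ge0). Qed.

Let pr_X j : pr P (X j) = pr P (Z j) * q j.
Proof.
rewrite /X -[_ `&` _]setIT -(preimage_setT e') /pr.
rewrite indep_f_e_e' // law_e_e' //.
by rewrite preimage_setT probability_setT mule1 (prE P (mZ j)) (prE P (me'_beyond j)).
Qed.

Let pr_Y j : pr P (Y j) = pr P (Z j) * q j ^+ 2.
Proof.
rewrite /pr indep_f_e_e' // law_e_e' //.
by rewrite (prE P (mZ j)) (prE P (me'_beyond j)) -!EFinM -mulrA -expr2.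
Qed.

Let cutoff_sub :
  [set t | C < f t * e t] `&` [set t | C < f t] `<=`
  \big[setU/set0]_(j < N) X j `|` near_cutoff f e C N.
Proof.
move=> t [Ct Cf]; have [j Zj] := slice_cover C_ge0 N_gt0 Cf.
have [ej|nej] := pselect (beyond N j (e t)).
  by left; apply: (sub_bigsetU_ord X j).
by right; split => //=; exact: (slice_not_beyond C_ge0 Zj nej).
Qed.

Lemma pr_cutoff_le_sqrt :
  pr P ([set t | C < f t * e t] `&` [set t | C < f t]) <=
  Num.sqrt (pr P [set t | C < f t] *
            pr P ([set t | C < f t * e' t /\ C < f t * e t] `&` [set t | C < f t]))
  + pr P (near_cutoff f e C N).
Proof.
have mA : measurable [set t | C < f t] by exact: measurable_ltr_set.
have sum_X : pr P (\big[setU/set0]_j X j) = \sum_j pr P (Z j) * q j.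
  rewrite pr_bigsetU //; last by apply: trivIset_in_slices => j t [].
  by apply: eq_bigr => j _; rewrite pr_X.
have sum_Y : pr P (\big[setU/set0]_j Y j) = \sum_j pr P (Z j) * q j ^+ 2.
  rewrite pr_bigsetU //; last by apply: trivIset_in_slices => j t [[]].
  by apply: eq_bigr => j _; rewrite pr_Y.
have sum_Z : pr P (\big[setU/set0]_j Z j) = \sum_j pr P (Z j).
  by rewrite pr_bigsetU //; apply: trivIset_in_slices => j t.
have mU : measurable (\big[setU/set0]_j X j) by exact: bigsetU_measurable.
have mnear := measurable_near_cutoff C mf me N.
have mxset : measurable ([set t | C < f t * e t] `&` [set t | C < f t]).
  by apply: measurableI => //; apply: measurable_ltr_set => //; exact: measurable_funM.
have cover := le_pr P mxset (measurableU _ _ mU mnear) cutoff_sub.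
apply: le_trans (le_trans cover (prU_le P mU mnear)) _.
rewrite lerD2r -[leLHS]ger0_norm ?pr_ge0 // -sqrtr_sqr ler_wsqrtr //.
rewrite sum_X; apply: le_trans (weighted_sum_sqr_le _ _ (fun j => pr_ge0 P _)) _.
rewrite -sum_Y -sum_Z ler_pM ?pr_ge0 //; apply: le_pr => //.
- exact: bigsetU_measurable.
- by apply: bigsetU_ord_sub => j t [[]].
- exact: bigsetU_measurable.
- apply: measurableI => //; apply: measurableI; apply: measurable_ltr_set => //;
    exact: measurable_funM.
- apply: bigsetU_ord_sub => j t [[Zj ej] e'j]; split; last by case: Zj => [[]].
  by split; [exact: (slice_beyond C_ge0 Zj e'j) | exact: (slice_beyond C_ge0 Zj ej)].
Qed.

End discretization.

Lemma pr_cutoff_sqr_le :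
  pr P ([set t | C < f t * e t] `&` [set t | C < f t]) ^+ 2 <=
  pr P [set t | C < f t] *
  pr P ([set t | C < f t * e' t /\ C < f t * e t] `&` [set t | C < f t]).
Proof.
rewrite -[leRHS]sqr_sqrtr ?mulr_ge0 ?pr_ge0 // ler_sqr ?nnegrE ?pr_ge0 ?sqrtr_ge0 //.
apply/ler_addgt0Pr => eps eps_gt0.
have /cvgrPdist_lt/(_ eps eps_gt0) [M _ small] := pr_near_cutoff_cvg0 C mf me P.
apply: le_trans (pr_cutoff_le_sqrt M.+1 (ltn0Sn M)) _; rewrite lerD2l ltW //.
by have := small M.+1 (leqnSn M); rewrite /= sub0r normrN ger0_norm ?pr_ge0.
Qed.

End cutoff_cauchy_schwarz.

Arguments pr_cutoff_sqr_le {d T R P f e e' C}.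

Theorem mainTheorem6 (d : measure_display) (T : measurableType d) (R : realType)
  (P : probability T R) (K : nat) (C : R)
  (V eps : 'I_K -> T -> R) (epsp : T -> R) (k : 'I_K) :
  (2 <= K)%N -> 0 < C ->
  (forall j, measurable_fun setT (V j)) ->
  (forall i, measurable_fun setT (eps i)) ->
  measurable_fun setT epsp ->
  (forall j t, 0 <= V j t) ->
  (forall i t, 0 < eps i t) -> (forall t, 0 < epsp t) ->
  MP_independent P V eps epsp ->
  (forall i, same_law P (eps i) epsp) ->
  same_law P epsp (fun t => (epsp t)^-1) ->
  (0 < P [set t | (C < V k t)%R])%E ->
  let SENS_IND := cprob P [set t | C < V k t * eps k t] [set t | C < V k t] in
  let SENS_MP := cprob P
      [set t | C < epsp t * (\sum_(j < K) V j t) /\ C < V k t * eps k t]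
      [set t | C < V k t] in
  SENS_IND ^+ 2 <= SENS_MP <= SENS_IND.
Proof.
move=> _ C_gt0 mV meps mepsp V_ge0 _ epsp_gt0 indep law _ PA_gt0; cbv zeta; rewrite !cprobE.
set A := [set t | C < V k t]; set IND := [set t | C < V k t * eps k t].
set MP := [set t | C < epsp t * _ /\ _].
have mA : measurable A by exact: measurable_ltr_set.
have mIND : measurable (IND `&` A).
  by apply: measurableI => //; apply: measurable_ltr_set => //; exact: measurable_funM.
have mMP : measurable (MP `&` A).
  apply: measurableI => //; apply: measurableI; apply: measurable_ltr_set => //;
    apply: measurable_funM => //; exact: measurable_sum.
have a_gt0 : 0 < pr P A by rewrite -lte_fin -prE.
have MP_le_IND : pr P (MP `&` A) <= pr P (IND `&` A).
  by apply: le_pr => // t [[_ ?] ?].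
have IND_sqr : pr P (IND `&` A) ^+ 2 <= pr P A * pr P (MP `&` A).
  apply: le_trans (pr_cutoff_sqr_le (mV k) (meps k) mepsp (ltW C_gt0)
    (MP_independent_indep3 k indep) (law k)) _.
  rewrite ler_wpM2l ?pr_ge0 //; apply: le_pr => //.
  - apply: measurableI => //; apply: measurableI; apply: measurable_ltr_set => //;
      exact: measurable_funM.
  - move=> t [[Cp Ce] Ct]; split => //; split => //; apply: lt_le_trans Cp _.
    by rewrite mulrC ler_pM2l // (bigD1 k) //= lerDl sumr_ge0.
exact: sqr_ratio_le a_gt0 IND_sqr MP_le_IND.
Qed.
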